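(* A subshift $X\subseteq A^{\mathbb{N}}$ over a finite alphabet $A$ is a sofic shift with a unique periodic point if and only if it is $1$-codable.
   Context: Subshifts are one-sided; a sofic shift is the set of labels of right-infinite paths in a finite edge-labeled graph; a periodic point is a point of the form $u^\omega$, $u$ nonempty. The ANS $\mathcal{U}$ has language $0^*$ with radix order, so $\mathrm{rep}(n)=0^n$; tuples are represented by left-padding with a new symbol $\#$ to equal length; $Y\subseteq\mathbb{N}^d$ is $1$-recognizable if $\mathrm{rep}(Y)$ is regular. For $\mathbf{y}\in\mathbb{N}^{\mathbb{N}}$: $\sum\mathbf{y}=\sum_iy_i$; if $\sum\mathbf{y}=d<\infty$, $\nu(\mathbf{y})$ is the unique nondecreasing $(n_1,\dots,n_d)$ with $y_j=|\{k:n_k=j\}|$ for all $j$. The coding dimension of $Y\subseteq\mathbb{N}^{\mathbb{N}}$ is the least $d$ with $\sum\mathbf{y}\le d$ for all $\mathbf{y}\in Y$, if it exists. $Y\subseteq\mathbb{N}^{\mathbb{N}}$ is weakly $1$-codable if for each $k$ the set $\{\nu(\mathbf{y}):\mathbf{y}\in Y,\sum\mathbf{y}\le k\}$ is $1$-recognizable in each dimension, and $1$-codable if moreover it has finite coding dimension. A set $Y\subseteq A^{\mathbb{N}}$ is (weakly) $1$-codable if there is a bijection $\pi\colon A\to\{0,\dots,|A|-1\}$ (applied letterwise) such that $\pi(Y)$ is (weakly) $1$-codable; $\pi^{-1}(0)$ is the zero symbol. *)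

From mathcomp Require Import all_boot.
Set Implicit Arguments. Unset Strict Implicit. Unset Printing Implicit Defensive.

Section Shifts.
Variable A : finType.

Definition shift_invariant (X : (nat -> A) -> Prop) : Prop :=
  forall x, X x -> X (fun n => x n.+1).

(* Closedness in the product (Cantor) topology: a point every prefix of
   which is a prefix of some point of X belongs to X. *)
Definition closed_shift (X : (nat -> A) -> Prop) : Prop :=
  forall x, (forall n, exists y, X y /\ forall i, i < n -> y i = x i) -> X x.

Definition subshift (X : (nat -> A) -> Prop) : Prop :=
  closed_shift X /\ shift_invariant X.

Definition sofic (X : (nat -> A) -> Prop) : Prop :=
  exists (nv ne : nat) (src tgt : 'I_ne -> 'I_nv) (lab : 'I_ne -> A),
    forall x : nat -> A,
      X x <-> exists e : nat -> 'I_ne,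
                (forall n, tgt (e n) = src (e n.+1)) /\
                (forall n, x n = lab (e n)).

(* x = u^omega with u nonempty, i.e. x is periodic with some period p > 0. *)
Definition periodic_point (x : nat -> A) : Prop :=
  exists p, 0 < p /\ forall n, x (n + p) = x n.

Definition unique_periodic (X : (nat -> A) -> Prop) : Prop :=
  exists x, [/\ X x, periodic_point x &
                forall y, X y -> periodic_point y -> forall n, y n = x n].
End Shifts.

Definition dfa_accepts (S : finType) (n : nat) (q0 : 'I_n)
  (delta : 'I_n -> S -> 'I_n) (F : pred 'I_n) (w : seq S) : bool :=
  F (foldl delta q0 w).

Definition regular (S : finType) (L : seq S -> Prop) : Prop :=
  exists (n : nat) (q0 : 'I_n) (delta : 'I_n -> S -> 'I_n) (F : pred 'I_n),
    forall w, L w <-> dfa_accepts q0 delta F w.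

(** * The unary ANS U: rep(n) = 0^n, tuples left-padded with '#'.
    Letters of the tuple alphabet {0,#}^d are encoded as {ffun 'I_d -> bool}
    with [true] standing for the symbol 0 and [false] for #. *)

Definition maxcomp (d : nat) (v : 'I_d -> nat) : nat := \max_(i < d) v i.

Definition rep_tuple (d : nat) (v : 'I_d -> nat) : seq {ffun 'I_d -> bool} :=
  let m := maxcomp v in
  mkseq (fun k => [ffun i => m - v i <= k]) m.

Definition one_recognizable (d : nat) (Y : ('I_d -> nat) -> Prop) : Prop :=
  regular (fun w : seq {ffun 'I_d -> bool} =>
             exists v, Y v /\ rep_tuple v = w).

Definition seq_sum_eq (y : nat -> nat) (s : nat) : Prop :=
  exists N, (forall i, N <= i -> y i = 0) /\ \sum_(i < N) y i = s.

Definition seq_sum_le (y : nat -> nat) (s : nat) : Prop :=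
  exists N, (forall i, N <= i -> y i = 0) /\ \sum_(i < N) y i <= s.

Definition is_nu (d : nat) (y : nat -> nat) (v : 'I_d -> nat) : Prop :=
  (forall i j : 'I_d, i <= j -> v i <= v j) /\
  (forall j, y j = #|[set k : 'I_d | v k == j]|).

(* For each k, the set {nu(y) : y in Y, sum y <= k} is 1-recognizable in
   each dimension d (its elements of dimension d are the nu(y) with sum y = d). *)
Definition weakly_one_codable_N (Y : (nat -> nat) -> Prop) : Prop :=
  forall k d : nat,
    one_recognizable (fun v : 'I_d -> nat =>
      exists y, [/\ Y y, seq_sum_eq y d, d <= k & is_nu y v]).

Definition finite_coding_dim (Y : (nat -> nat) -> Prop) : Prop :=
  exists d, forall y, Y y -> seq_sum_le y d.

Definition one_codable_N (Y : (nat -> nat) -> Prop) : Prop :=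
  weakly_one_codable_N Y /\ finite_coding_dim Y.

Definition letter_image (A : finType) (pi : A -> 'I_#|A|)
  (X : (nat -> A) -> Prop) : (nat -> nat) -> Prop :=
  fun y => exists x, X x /\ forall n, y n = nat_of_ord (pi (x n)).

Definition one_codable (A : finType) (X : (nat -> A) -> Prop) : Prop :=
  exists pi : A -> 'I_#|A|, bijective pi /\ one_codable_N (letter_image pi X).

From mathcomp Require Import all_boot zify perm.
From Stdlib Require Import ClassicalEpsilon FunctionalExtensionality.
Set Implicit Arguments. Unset Strict Implicit. Unset Printing Implicit Defensive.

(** This relation
      [encodes] determines the weights of x, and is compatible with
      exchanging prefixes of equal weight.  Hence weak 1-codability says
      that each language R_d of codes of points of X has finite index.
    - (<=) Bounded coding dimension forces every point to end in 0^omega,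
      so 0^omega is the unique periodic point; the congruences of the
      finitely many R_d (d <= D), applied to the codes of a word u, together
      with the weight of u, form finitely many follower classes.
    - (=>) The unique periodic point is constant, a^omega; sending a to 0, a
      pumping argument bounds the number of letters other than a in a point
      of X by the number of follower classes (finite coding dimension), and
      the follower class of the word coded by a prefix of a code gives a
      finite-index congruence for every R_d. *)

Definition asbool (P : Prop) : bool :=
  if excluded_middle_informative P then true else false.

Lemma asboolP (P : Prop) : reflect P (asbool P).
Proof. by rewrite /asbool; case: excluded_middle_informative => h; constructor. Qed.

Lemma asboolT (P : Prop) : P -> asbool P = true.
Proof. by move/asboolP. Qed.

Section RightCongruence.
Variable S : finType.
Implicit Types (L : seq S -> Prop) (u v w : seq S).

Definition finite_index L : Prop :=
  exists (T : finType) (f : seq S -> T),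
    forall u v, f u = f v -> forall w, L (u ++ w) <-> L (v ++ w).

Lemma regular_finite_index L : regular L -> finite_index L.
Proof.
case=> n [q0 [delta [F HL]]].
exists ('I_n : finType), (foldl delta q0) => u v huv w.
by rewrite !HL /dfa_accepts !foldl_cat huv.
Qed.

Lemma finite_index_ext L L' :
  (forall w, L w <-> L' w) -> finite_index L -> finite_index L'.
Proof. by move=> E [T [f Hf]]; exists T, f => u v huv w; rewrite -!E; apply: Hf. Qed.

(** Reversal: the class of u is the set of classes of words p with p.rev(u)
    in L; it determines the left quotient of L by rev u. *)
Lemma finite_index_rev L : finite_index L -> finite_index (fun w => L (rev w)).
Proof.
case=> T [f Hf].
pose g u := [set c : T | asbool (exists p, f p = c /\ L (p ++ rev u))].
have g_spec u w : (f (rev w) \in g u) <-> L (rev w ++ rev u).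
  rewrite inE; split; last by move=> h; apply/asboolP; exists (rev w).
  by move/asboolP=> [p [hp hL]]; apply/(Hf _ _ hp).
exists ({set T} : finType), g => u v huv w.
by rewrite !rev_cat -g_spec huv g_spec.
Qed.

Section MinimalAutomaton.
Variables (L : seq S -> Prop) (T : finType) (f : seq S -> T).
Hypothesis f_congr : forall u v, f u = f v -> forall w, L (u ++ w) <-> L (v ++ w).

Definition class_rep (q : T) : seq S :=
  if excluded_middle_informative (exists u, f u = q) is left H
  then proj1_sig (constructive_indefinite_description _ H) else [::].

Lemma class_repP q u : f u = q -> f (class_rep q) = q.
Proof.
move=> hu; rewrite /class_rep; case: excluded_middle_informative => [H|[]].
  by case: constructive_indefinite_description.
by exists u.
Qed.

(** The transition of the automaton whose states are the classes. *)
Definition class_step (q : T) (a : S) : T := f (class_rep q ++ [:: a]).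

Lemma class_run w : exists u,
  foldl class_step (f [::]) w = f u /\ forall t, L (u ++ t) <-> L (w ++ t).
Proof.
elim/last_ind: w => [|w a [u [hu hq]]]; first by exists [::].
rewrite -cats1 foldl_cat /= hu.
exists (class_rep (f u) ++ [:: a]); split=> // t.
have rep_u := class_repP (erefl (f u)).
by rewrite -!catA f_congr // hq.
Qed.

End MinimalAutomaton.

Lemma finite_index_regular L : finite_index L -> regular L.
Proof.
case=> T [f Hf].
pose delta (i : 'I_#|T|) (a : S) := enum_rank (class_step f (enum_val i) a).
pose F (i : 'I_#|T|) := asbool (L (class_rep f (enum_val i))).
exists #|T|, (enum_rank (f [::])), delta, F => w.
have run q : foldl delta (enum_rank q) w = enum_rank (foldl (class_step f) q w).
  by elim: w q => //= a w IH q; rewrite /delta enum_rankK IH.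
rewrite /dfa_accepts run /F enum_rankK.
have [u [-> hu]] := class_run Hf w.
have Lrep : L (class_rep f (f u)) <-> L w.
  have := Hf _ _ (class_repP (erefl (f u))) [::]; have := hu [::].
  by rewrite !cats0 => -> ->.
by split=> [h|/asboolP/Lrep //]; apply/asboolP/Lrep.
Qed.

End RightCongruence.

Lemma finite_index_family (S : nat -> finType) (L : forall d, seq (S d) -> Prop) D :
  (forall d, d <= D -> finite_index (L d)) ->
  exists K (F : forall d, seq (S d) -> 'I_K), forall d, d <= D ->
    forall u v, F d u = F d v -> forall w, L d (u ++ w) <-> L d (v ++ w).
Proof.
move=> HL.
have HK d : exists K (f : seq (S d) -> 'I_K.+1), d <= D ->
    forall u v, f u = f v -> forall w, L d (u ++ w) <-> L d (v ++ w).
  case: (leqP d D) => hd; last by exists 0, (fun _ => ord0); lia.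
  have [T [f Hf]] := HL d hd.
  exists #|T|, (fun u => widen_ord (leqnSn _) (enum_rank (f u))) => _ u v huv.
  by apply: Hf; apply: enum_rank_inj; apply: val_inj; exact: (congr1 val huv).
pose K d := proj1_sig (constructive_indefinite_description _ (HK d)).
have HF d := constructive_indefinite_description _
               (proj2_sig (constructive_indefinite_description _ (HK d))).
pose M := \max_(d < D.+1) K d.
exists M.+1, (fun d u => inord (proj1_sig (HF d) u)) => d hd u v.
move/(congr1 (@nat_of_ord _)).
have KM : K d < M.+1 by rewrite ltnS (leq_bigmax (Ordinal (hd : d < D.+1))).
rewrite !inordK ?(leq_trans (ltn_ord _) KM) // => /val_inj.
exact: (proj2_sig (HF d) hd).
Qed.
Section Concatenation.
Variable A : finType.
Implicit Types (X : (nat -> A) -> Prop) (u w : seq A) (x z : nat -> A).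

Definition catp u z : nat -> A :=
  fun n => if n < size u then nth (z 0) u n else z (n - size u).

Lemma mem_ext X x y : X x -> (forall n, x n = y n) -> X y.
Proof. by move=> hx e; rewrite -(functional_extensionality _ _ e). Qed.

Lemma catp_cat u w z n : catp (u ++ w) z n = catp u (catp w z) n.
Proof.
rewrite /catp size_cat nth_cat; case: (ltnP n (size u)) => hu.
  by rewrite ltn_addr // (set_nth_default (catp w z 0)).
case: ifP => hw.
  by have -> : n - size u < size w by lia.
have -> : n - size u < size w = false by lia.
by rewrite subnDA.
Qed.

Lemma catp_rcons u a z n : catp (rcons u a) z n = catp u (catp [:: a] z) n.
Proof. by rewrite -cats1 catp_cat. Qed.

Lemma catp_lt u z z' n : n < size u -> catp u z n = catp u z' n.
Proof. by move=> h; rewrite /catp h (set_nth_default (z' 0)). Qed.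

Lemma catp_size u z n : catp u z (size u + n) = z n.
Proof. by rewrite /catp ltnNge leq_addr /=; congr z; lia. Qed.

Lemma catp_mkseq x m z n : n < m -> catp (mkseq x m) z n = x n.
Proof. by move=> h; rewrite /catp size_mkseq h nth_mkseq. Qed.

Lemma catp_mkseq_shift x m n : catp (mkseq x m) (fun i => x (m + i)) n = x n.
Proof.
case: (ltnP n m) => h; first by rewrite catp_mkseq.
by rewrite /catp size_mkseq ltnNge h /=; congr x; lia.
Qed.

Lemma shift_iter X x m : shift_invariant X -> X x -> X (fun n => x (m + n)).
Proof.
move=> Hs; elim: m => [|m IH] hx; first exact: mem_ext hx _.
by apply: mem_ext (Hs _ (IH hx)) _ => n; rewrite addSnnS.
Qed.

Lemma shift_catp X u z : shift_invariant X -> X (catp u z) -> X z.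
Proof. by move=> Hs /(shift_iter (size u) Hs) h; apply: mem_ext h _ => n; exact: catp_size. Qed.

Lemma closed_follower X u : closed_shift X -> closed_shift (fun z => X (catp u z)).
Proof.
move=> Hc z Hz; apply: Hc => n; have [y [hy hyz]] := Hz n.
exists (catp u y); split=> // i hi; case: (ltnP i (size u)) => h; first exact: catp_lt.
by rewrite /catp ltnNge h /=; apply: hyz; lia.
Qed.

End Concatenation.

Section SoficFollowers.
Variable A : finType.
Implicit Types (X : (nat -> A) -> Prop) (u : seq A) (x z : nat -> A).

Lemma sofic_of_fin X (V E : finType) (src tgt : E -> V) (lab : E -> A) :
  (forall x, X x <-> exists e : nat -> E,
       (forall n, tgt (e n) = src (e n.+1)) /\ (forall n, x n = lab (e n))) ->
  sofic X.
Proof.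
move=> HX; exists #|V|, #|E|, (fun i => enum_rank (src (enum_val i))),
  (fun i => enum_rank (tgt (enum_val i))), (fun i => lab (enum_val i)) => x.
rewrite HX; split=> -[e [he hl]].
  by exists (fun n => enum_rank (e n)); split=> n; rewrite !enum_rankK ?he.
exists (fun n => enum_val (e n)); split=> // n.
by apply: enum_rank_inj; apply: he.
Qed.

Definition finite_followers X : Prop :=
  exists (T : finType) (g : seq A -> T),
    forall u v, g u = g v -> forall z, X (catp u z) -> X (catp v z).

Section PresentedShift.
Variables (nv ne : nat) (src tgt : 'I_ne -> 'I_nv) (lab : 'I_ne -> A).

Definition reaches u (V : 'I_nv) : Prop :=
  exists e : nat -> 'I_ne,
    [/\ (forall n, n.+1 < size u -> tgt (e n) = src (e n.+1)),
        (forall n, n < size u -> nth (lab (e n)) u n = lab (e n)) &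
        (u = [::] \/ tgt (e (size u).-1) = V)].

Definition labels_from (V : 'I_nv) z : Prop :=
  exists e : nat -> 'I_ne,
    [/\ (forall n, tgt (e n) = src (e n.+1)), (forall n, z n = lab (e n)) &
        src (e 0) = V].

Lemma presented_catp X u z :
  (forall x, X x <-> exists e : nat -> 'I_ne,
       (forall n, tgt (e n) = src (e n.+1)) /\ (forall n, x n = lab (e n))) ->
  X (catp u z) <-> exists V, reaches u V /\ labels_from V z.
Proof.
move=> HX; rewrite HX; split.
- case=> e [he hl]; case: u hl => [|a u'] hl.
    exists (src (e 0)); split; first by exists e; split=> //; left.
    by exists e; split=> // n; rewrite -hl /catp subn0.
  set u := a :: u' in hl *; exists (tgt (e (size u).-1)); split.
    exists e; split=> //; last by right.
    by move=> n hn; rewrite -hl /catp hn; exact: set_nth_default.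
  exists (fun n => e (size u + n)); split=> [n|n|].
  + by rewrite he addnS.
  + by rewrite -hl catp_size.
  + by rewrite addn0 he prednK.
- case=> V [[e1 [h1 h2 h3]] [e2 [h4 h5 h6]]].
  exists (fun n => if n < size u then e1 n else e2 (n - size u)); split=> n.
  + case: (ltnP n.+1 (size u)) => hn; first by rewrite ltnW // h1.
    case: (ltnP n (size u)) => hn'; last by rewrite h4; congr (src (e2 _)); lia.
    case: h3 => [h3|h3]; first by rewrite h3 in hn'.
    have en : n = (size u).-1 by lia.
    by rewrite en h3 -h6; congr (src (e2 _)); lia.
  + rewrite /catp; case: ifP => hn; last exact: h5.
    by rewrite (set_nth_default (lab (e1 n))) // h2.
Qed.

End PresentedShift.

(** The class of u: the set of vertices reachable by reading u. *)
Lemma sofic_finite_followers X : sofic X -> finite_followers X.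
Proof.
case=> nv [ne [src [tgt [lab HX]]]].
exists ({set 'I_nv} : finType), (fun u => [set V | asbool (reaches src tgt lab u V)]).
move=> u v huv z; rewrite !(presented_catp _ _ HX) => -[V [hr hf]].
exists V; split=> //.
have : V \in [set V | asbool (reaches src tgt lab u V)] by rewrite inE asboolT.
by rewrite huv inE => /asboolP.
Qed.

Section FollowerGraph.
Variables (X : (nat -> A) -> Prop) (T : finType) (g : seq A -> T).
Hypothesis HX : subshift X.
Hypothesis g_followers : forall u v, g u = g v -> forall z, X (catp u z) -> X (catp v z).

Definition follower_edge (t : T * A * T) : Prop :=
  exists u, [/\ g u = t.1.1, g (rcons u t.1.2) = t.2 &
                exists z, X (catp (rcons u t.1.2) z)].

Definition follower_edges := {t : T * A * T | asbool (follower_edge t)}.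

Definition follower_path (x : nat -> A) : Prop :=
  exists e : nat -> follower_edges,
    (forall n, (val (e n)).2 = (val (e n.+1)).1.1) /\
    (forall n, x n = (val (e n)).1.2).

Lemma point_follower_path x : X x -> follower_path x.
Proof.
move=> hx.
have he n : asbool (follower_edge (g (mkseq x n), x n, g (mkseq x n.+1))).
  apply: asboolT; exists (mkseq x n); rewrite /= -mkseqS; split=> //.
  exists (fun i => x (n.+1 + i)); apply: mem_ext hx _ => i.
  by rewrite catp_mkseq_shift.
by exists (fun n => exist (fun t => asbool (follower_edge t)) _ (he n)).
Qed.

(** Conversely, choosing for each edge a word realizing it, every finite
    portion of the label of a path is a follower of the first such word;
    closedness of X then puts the whole label in X. *)
Lemma follower_path_point x : follower_path x -> X x.
Proof.
have [Hc Hs] := HX; case=> e [he hl].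
have hed n : follower_edge (val (e n)) by exact/asboolP/(valP (e n)).
pose U n := proj1_sig (constructive_indefinite_description _ (hed n)).
have hU n : [/\ g (U n) = (val (e n)).1.1,
     g (rcons (U n) (val (e n)).1.2) = (val (e n)).2 &
     exists z, X (catp (rcons (U n) (val (e n)).1.2) z)].
  by rewrite /U; case: constructive_indefinite_description.
have approx m n : exists y, X (catp (U n) y) /\ forall i, i < m -> y i = x (n + i).
  elim: m n => [|m IH] n.
    have [_ _ [z hz]] := hU n; exists (catp [:: (val (e n)).1.2] z); split=> //.
    by apply: mem_ext hz _ => i; rewrite catp_rcons.
  have [y [hy hyx]] := IH n.+1; have [h1 _ _] := hU n.+1; have [_ h2 _] := hU n.
  have hy' : X (catp (rcons (U n) (val (e n)).1.2) y).
    by apply: g_followers hy; rewrite h1 h2 -he.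
  exists (catp [:: (val (e n)).1.2] y); split.
    by apply: mem_ext hy' _ => i; rewrite catp_rcons.
  case=> [|i] hi; first by rewrite /catp /= hl addn0.
  by rewrite /catp /= subn1 /= hyx // addnS.
apply: (shift_catp (u := U 0) Hs); apply: (closed_follower (u := U 0) Hc) => m.
by have [y [hy hyx]] := approx m 0; exists y.
Qed.

End FollowerGraph.

Lemma sofic_iff_finite_followers X : subshift X -> (sofic X <-> finite_followers X).
Proof.
move=> HX; split; first exact: sofic_finite_followers.
case=> T [g Hg].
apply: (@sofic_of_fin X T (follower_edges X g) (fun t => (val t).1.1)
          (fun t => (val t).2) (fun t => (val t).1.2)) => x.
split=> [|hx]; [exact: point_follower_path | exact: follower_path_point HX Hg x hx].
Qed.

End SoficFollowers.

Section Weights.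
Variables (A : finType) (pv : A -> nat).
Implicit Types (x y z : nat -> A) (u : seq A).

Definition wsum x n : nat := \sum_(p < n) pv (x p).

Definition column d c : {ffun 'I_d -> bool} := [ffun i : 'I_d => c <= i].
Arguments column : clear implicits.

(** w is the reversed code of the weight sequence of x, of total weight d:
    its j-th letter is the column of the prefix weight up to position j, and
    x has no weight after the position at which the weight d is reached. *)
Definition encodes d x (w : seq {ffun 'I_d -> bool}) : Prop :=
  [/\ forall j, j < size w ->
        nth (column d 0) w j = column d (wsum x j.+1) /\ wsum x j.+1 < d,
      wsum x (size w).+1 = d & forall p, size w < p -> pv (x p) = 0].
Arguments encodes : clear implicits.

Lemma wsum0 x : wsum x 0 = 0.
Proof. by rewrite /wsum big_ord0. Qed.

Lemma wsumS x n : wsum x n.+1 = wsum x n + pv (x n).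
Proof. by rewrite /wsum big_ord_recr. Qed.

Lemma wsum_mono x m n : m <= n -> wsum x m <= wsum x n.
Proof.
move=> h; rewrite -(subnKC h); elim: (n - m) => [|k IH]; first by rewrite addn0.
by rewrite addnS wsumS (leq_trans IH) // leq_addr.
Qed.

Lemma wsum_ext x y n : (forall p, p < n -> x p = y p) -> wsum x n = wsum y n.
Proof. by move=> h; apply: eq_bigr => i _; rewrite h. Qed.

Lemma wsum_stable x N : (forall p, N <= p -> pv (x p) = 0) ->
  forall n, N <= n -> wsum x n = wsum x N.
Proof.
move=> hN n h; rewrite -(subnKC h); elim: (n - N) => [|k IH]; first by rewrite addn0.
by rewrite addnS wsumS IH hN ?addn0 // leq_addr.
Qed.

Lemma column_inj d c c' : c <= d -> c' <= d -> column d c = column d c' -> c = c'.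
Proof.
wlog lt_cc' : c c' / c < c' => [W|] hc hc' e.
  by case: (ltngtP c c') => // h; [exact: W | apply/esym/W].
have hd : c < d by lia.
have := congr1 (fun f : {ffun 'I_d -> bool} => f (Ordinal hd)) e.
by rewrite !ffunE /= leqnn leqNgt lt_cc'.
Qed.

Section Encodes.
Variables (d : nat) (x : nat -> A) (w : seq {ffun 'I_d -> bool}).
Hypothesis x_w : encodes d x w.

Lemma encodes_tail n : size w < n -> wsum x n = d.
Proof.
have [_ h2 h3] := x_w; elim: n => // n IH hn.
case: (ltnP (size w) n) => h; first by rewrite wsumS IH // h3 // addn0.
by have -> : n = size w by lia.
Qed.

Lemma encodes_le n : wsum x n <= d.
Proof.
rewrite -(encodes_tail (ltnSn (size w))).
case: (leqP n (size w).+1) => h; first exact: wsum_mono.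
by rewrite (encodes_tail (ltnW h)) (encodes_tail (ltnSn _)).
Qed.

End Encodes.

Lemma encodes_wsum d x x' w : encodes d x w -> encodes d x' w ->
  forall n, wsum x n = wsum x' n.
Proof.
move=> x_w x'_w; case=> [|n]; first by rewrite !wsum0.
case: (ltnP n (size w)) => h; last by rewrite (encodes_tail x_w) ?(encodes_tail x'_w).
have [h1 _ _] := x_w; have [h1' _ _] := x'_w.
have [e1 l1] := h1 n h; have [e1' l1'] := h1' n h.
by apply: (column_inj (ltnW l1) (ltnW l1')); rewrite -e1 -e1'.
Qed.

Lemma encodes_weights d x x' w : encodes d x w -> encodes d x' w ->
  forall p, pv (x p) = pv (x' p).
Proof.
move=> x_w x'_w p; have := encodes_wsum x_w x'_w p.+1.
by rewrite !wsumS (encodes_wsum x_w x'_w p) => /addnI.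
Qed.

Lemma encodes_unique d x w w' : encodes d x w -> encodes d x w' -> w = w'.
Proof.
move=> x_w x_w'; have [h1 h2 _] := x_w; have [h1' h2' _] := x_w'.
have hs : size w = size w'.
  case: (ltngtP (size w) (size w')) => // h.
    by have [_] := h1' _ h; rewrite h2 ltnn.
  by have [_] := h1 _ h; rewrite h2' ltnn.
apply: (eq_from_nth (x0 := column d 0) hs) => j hj.
have hj' : j < size w' by rewrite -hs.
by have [-> _] := h1 j hj; have [-> _] := h1' j hj'.
Qed.

Lemma encodes_exists d x N : (forall p, N <= p -> pv (x p) = 0) -> wsum x N = d ->
  exists w, encodes d x w.
Proof.
move=> hN hS; have hge := wsum_stable hN.
have hle n : wsum x n <= d.
  case: (leqP n N) => h; first by rewrite -hS wsum_mono.
  by rewrite -hS hge // ltnW.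
have ex : exists j, wsum x j.+1 == d by exists N; rewrite hge ?hS.
case: (ex_minnP ex) => P /eqP hP hmin.
exists (mkseq (fun j => column d (wsum x j.+1)) P); split; rewrite ?size_mkseq //.
- move=> j hj; rewrite nth_mkseq //; split=> //.
  by rewrite ltn_neqAle hle andbT; apply/negP => /hmin; lia.
- move=> p hp.
  have sum_d n : P < n -> wsum x n = d.
    by move=> hn; apply/eqP; rewrite eqn_leq hle -hP wsum_mono.
  by move: (sum_d p.+1 (ltnW hp)); rewrite wsumS sum_d // -{2}(addn0 d) => /addnI.
Qed.

Lemma wsum_catp_lt u z z' n : n <= size u -> wsum (catp u z) n = wsum (catp u z') n.
Proof. by move=> h; apply: wsum_ext => p hp; apply: catp_lt; lia. Qed.

Lemma wsum_catp_ge u z n :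
  wsum (catp u z) (size u + n) = wsum (catp u z) (size u) + wsum z n.
Proof.
elim: n => [|n IH]; first by rewrite addn0 wsum0 addn0.
by rewrite addnS wsumS IH wsumS catp_size addnA.
Qed.

Definition word_weight u : nat := \sum_(a <- u) pv a.

Lemma wsum_catp_size u z : wsum (catp u z) (size u) = word_weight u.
Proof.
elim: u => [|a u IH]; first by rewrite wsum0 /word_weight big_nil.
by rewrite /word_weight big_cons -/(word_weight u) -IH /wsum big_ord_recl.
Qed.

(** The part of a code contributed by the prefix u; it does not depend on z. *)
Definition prefix_code d u z : seq {ffun 'I_d -> bool} :=
  mkseq (fun j => column d (wsum (catp u z) j.+1)) (size u).
Arguments prefix_code : clear implicits.

Lemma prefix_code_indep d u z z' : prefix_code d u z = prefix_code d u z'.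
Proof.
apply/eq_in_map => j; rewrite mem_iota add0n => /andP [_ h].
by rewrite (wsum_catp_lt z z').
Qed.

Lemma encodes_prefix d u z w : encodes d (catp u z) w ->
  word_weight u < d -> w = prefix_code d u z ++ drop (size u) w.
Proof.
rewrite -(wsum_catp_size u z) => hm hs; have [h1 h2 _] := hm.
have hsz : size u <= size w.
  case: (leqP (size u) (size w)) => // h.
  by have := wsum_mono (catp u z) h; rewrite h2; lia.
rewrite -{1}(cat_take_drop (size u) w); congr (_ ++ _).
apply: (eq_from_nth (x0 := column d 0)).
  by rewrite size_takel // size_mkseq.
move=> j; rewrite size_takel // => hj.
by rewrite nth_take // /prefix_code nth_mkseq //; have [-> _] := h1 j (leq_trans hj hsz).
Qed.

Lemma encodes_transfer d u u' z w :
  encodes d (catp u z) (prefix_code d u z ++ w) ->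
  word_weight u' = word_weight u -> word_weight u < d ->
  encodes d (catp u' z) (prefix_code d u' z ++ w).
Proof.
rewrite -(wsum_catp_size u z) -(wsum_catp_size u' z) => -[h1 h2 h3] hs hd.
rewrite /encodes !size_cat !size_mkseq in h1 h2 h3 *; split.
- move=> j hj; rewrite nth_cat size_mkseq.
  case: (ltnP j (size u')) => hju.
    rewrite nth_mkseq //; split=> //.
    by apply: leq_ltn_trans hd; rewrite -hs; apply: wsum_mono; lia.
  have := h1 (size u + (j - size u')); rewrite nth_cat size_mkseq.
  have -> : size u + (j - size u') < size u = false by lia.
  have -> : size u + (j - size u') - size u = j - size u' by lia.
  case; first by lia.
  move=> ->; rewrite -addnS wsum_catp_ge -hs.
  have -> : j.+1 = size u' + (j - size u').+1 by lia.
  by rewrite wsum_catp_ge.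
- move: h2; have -> : (size u + size w).+1 = size u + (size w).+1 by lia.
  rewrite wsum_catp_ge -hs -wsum_catp_ge.
  by have -> : size u' + (size w).+1 = (size u' + size w).+1 by lia.
- move=> p hp; have := h3 (size u + (p - size u')); rewrite catp_size.
  have -> : catp u' z p = z (p - size u') by rewrite /catp; case: ltnP => //; lia.
  by apply; lia.
Qed.

End Weights.

Arguments column : clear implicits.
Arguments encodes {A} pv d x w.
Arguments prefix_code {A} pv d u z.

Lemma card_ord_lt d n : #|[set k : 'I_d | k < n]| = minn n d.
Proof.
have h : minn n d <= d by rewrite geq_minr.
have -> : [set k : 'I_d | k < n] = [set widen_ord h k | k : 'I_(minn n d)].
  apply/setP => k; rewrite inE; apply/idP/imsetP.
  - move=> hk; have hk' : k < minn n d by rewrite leq_min hk ltn_ord.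
    by exists (Ordinal hk') => //; apply: val_inj.
  - by case=> k' _ ->; have := ltn_ord k'; rewrite leq_min => /andP[].
by rewrite card_imset ?card_ord // => a b /(congr1 val) /= /val_inj.
Qed.

Lemma card_lt_succ d (v : 'I_d -> nat) j :
  #|[set k | v k < j.+1]| = #|[set k | v k < j]| + #|[set k | v k == j]|.
Proof.
rewrite -(cardsID [set k | v k < j] [set k | v k < j.+1]).
have -> : [set k | v k < j.+1] :&: [set k | v k < j] = [set k | v k < j].
  by apply/setP => k; rewrite !inE; lia.
have -> : [set k | v k < j.+1] :\: [set k | v k < j] = [set k | v k == j].
  by apply/setP => k; rewrite !inE; lia.
by [].
Qed.

Lemma nondec_card d (v : 'I_d -> nat) t (i : 'I_d) :
  (forall i j : 'I_d, i <= j -> v i <= v j) ->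
  (#|[set k | v k < t]| <= i) = (t <= v i).
Proof.
move=> hv; apply/idP/idP => h.
- rewrite leqNgt; apply/negP => hlt.
  have : [set k : 'I_d | k < i.+1] \subset [set k | v k < t].
    apply/subsetP => k; rewrite !inE ltnS => hk.
    exact: leq_ltn_trans (hv _ _ hk) hlt.
  move/subset_leq_card; rewrite card_ord_lt (minn_idPl (ltn_ord i)); lia.
- have : [set k | v k < t] \subset [set k : 'I_d | k < i].
    apply/subsetP => k; rewrite !inE => hk; rewrite ltnNge; apply/negP => hik.
    by have := hv _ _ hik; lia.
  move/subset_leq_card; rewrite card_ord_lt => H; apply: (leq_trans H).
  exact: geq_minl.
Qed.

Section NuCode.
Variables (A : finType) (pv : A -> nat).

Lemma nu_wsum d (x : nat -> A) (v : 'I_d -> nat) :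
  is_nu (fun p => pv (x p)) v -> forall j, wsum pv x j = #|[set k | v k < j]|.
Proof.
case=> _ hc; elim=> [|j IH]; last by rewrite wsumS IH hc card_lt_succ.
rewrite wsum0; apply/esym/eqP; rewrite cards_eq0; apply/eqP/setP => k.
by rewrite !inE.
Qed.

Lemma nu_encodes d (x : nat -> A) (v : 'I_d -> nat) :
  is_nu (fun p => pv (x p)) v -> encodes pv d x (rev (rep_tuple v)).
Proof.
move=> hnu; have hS := nu_wsum hnu; have [hv hc] := hnu.
set m := maxcomp v.
have hle i : v i <= m by exact: (leq_bigmax i).
have hsz : size (rev (rep_tuple v)) = m by rewrite size_rev size_mkseq.
split; rewrite hsz.
- move=> j hj.
  have [i0 hi0] : exists i0 : 'I_d, v i0 = m.
    have hd : d.-1 < d.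
      case: (posnP d) => [d0|]; last by lia.
      by move: hj; rewrite /m /maxcomp big1 // => i _; have := ltn_ord i; lia.
    by rewrite /m /maxcomp (bigmax_eq_arg (Ordinal hd)) //; eexists.
  rewrite nth_rev size_mkseq // nth_mkseq; last by lia.
  split.
    by apply/ffunP => i; rewrite !ffunE hS nondec_card //; have := hle i; lia.
  have := nondec_card (j.+1) i0 hv; rewrite hi0 hj -hS => /idP h.
  exact: leq_ltn_trans h (ltn_ord i0).
- rewrite hS; have -> : [set k | v k < m.+1] = [set: 'I_d].
    by apply/setP => k; rewrite !inE ltnS hle.
  by rewrite cardsT card_ord.
- move=> p hp; rewrite hc; apply/eqP; rewrite cards_eq0; apply/eqP/setP => k.
  by rewrite !inE; apply/negbTE/eqP; have := hle k; lia.
Qed.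

(** A weight sequence of finite sum d has a nu: v_i is the least n such
    that the prefix of length n+1 has weight > i. *)
Lemma nu_exists d (x : nat -> A) :
  seq_sum_eq (fun p => pv (x p)) d -> exists v : 'I_d -> nat, is_nu (fun p => pv (x p)) v.
Proof.
case=> N [hN hsum]; have hge := wsum_stable hN.
have ex (i : 'I_d) : exists n, i < wsum pv x n.+1.
  by exists N; rewrite hge // [wsum _ _ _]hsum ltn_ord.
pose v (i : 'I_d) := ex_minn (ex i).
have v_le (i : 'I_d) j : (v i <= j) = (i < wsum pv x j.+1).
  rewrite /v; case: ex_minnP => n hn hmin; apply/idP/idP => h; last exact: hmin.
  exact: leq_trans hn (wsum_mono pv x (h : n.+1 <= j.+1)).
have card_v j : #|[set k | v k < j]| = wsum pv x j.
  case: j => [|j].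
    by rewrite wsum0; apply/eqP; rewrite cards_eq0; apply/eqP/setP => k; rewrite !inE.
  have -> : [set k | v k < j.+1] = [set k : 'I_d | k < wsum pv x j.+1].
    by apply/setP => k; rewrite !inE ltnS v_le.
  rewrite card_ord_lt; apply/minn_idPl.
  case: (leqP j.+1 N) => h; first by rewrite -hsum wsum_mono.
  by rewrite hge ?[wsum _ _ _]hsum // ltnW.
exists v; split.
- by move=> i j hij; rewrite v_le; apply: leq_ltn_trans hij _; rewrite -v_le.
- move=> j; apply/eqP; rewrite -(eqn_add2l (#|[set k | v k < j]|)) -card_lt_succ.
  by rewrite !card_v wsumS.
Qed.

End NuCode.

Section CodeLanguages.
Variables (A : finType) (X : (nat -> A) -> Prop) (pi : A -> 'I_#|A|).

Definition weight (a : A) : nat := pi a.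

Lemma weight_inj : injective pi -> injective weight.
Proof. by move=> pi_inj a b /val_inj /pi_inj. Qed.

Definition code_lang d (w : seq {ffun 'I_d -> bool}) : Prop :=
  exists x, X x /\ encodes weight d x w.
Arguments code_lang : clear implicits.

Definition rep_lang k d (w : seq {ffun 'I_d -> bool}) : Prop :=
  exists v, (exists y, [/\ letter_image pi X y, seq_sum_eq y d, d <= k & is_nu y v])
            /\ rep_tuple v = w.
Arguments rep_lang : clear implicits.

Lemma rep_lang_rev k d w : d <= k -> (rep_lang k d w <-> code_lang d (rev w)).
Proof.
move=> hdk; split.
- case=> v [[y [[x [hx hy]] _ _ hnu]] <-].
  have ey : y = fun p => weight (x p) by apply: functional_extensionality.
  by subst y; exists x; split=> //; exact: nu_encodes hnu.
- case=> x [hx hm].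
  have hs : seq_sum_eq (fun p => weight (x p)) d.
    have [_ h2 h3] := hm.
    by exists (size (rev w)).+1; split=> // i hi; apply: h3; lia.
  have [v hnu] := nu_exists hs.
  exists v; split; first by exists (fun p => weight (x p)); split=> //; exists x.
  by rewrite -[rep_tuple v]revK (encodes_unique (nu_encodes hnu) hm) revK.
Qed.

Lemma weakly_codable_finite_index :
  weakly_one_codable_N (letter_image pi X) -> forall d, finite_index (code_lang d).
Proof.
move=> Hw d; have /regular_finite_index/finite_index_rev := Hw d d.
apply: finite_index_ext => w; have := rep_lang_rev (rev w) (leqnn d).
by rewrite revK.
Qed.

Lemma finite_index_weakly_codable :
  (forall d, finite_index (code_lang d)) -> weakly_one_codable_N (letter_image pi X).
Proof.
move=> HR k d; have [hdk|hkd] : d <= k \/ k < d by lia.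
  apply: finite_index_regular; apply: finite_index_ext (finite_index_rev (HR d)) => w.
  by have [to_R to_rep] := rep_lang_rev w hdk; split=> h; [apply: to_rep | apply: to_R].
exists 1, ord0, (fun q _ => q), pred0 => w; split=> //.
by case=> v [[y [_ _ h _]] _]; lia.
Qed.

End CodeLanguages.

Arguments code_lang {A} X pi d w.
Arguments rep_lang {A} X pi k d w.

Section CodableShift.
Variables (A : finType) (X : (nat -> A) -> Prop) (pi : A -> 'I_#|A|) (D : nat).
Hypothesis HX : subshift X.
Hypothesis pi_inj : injective pi.
Hypothesis coding_dim : forall y, letter_image pi X y -> seq_sum_le y D.
Local Notation weight := (weight pi).

Lemma weight_of_point x : X x -> letter_image pi X (fun p => weight (x p)).
Proof. by move=> hx; exists x. Qed.

Lemma weight_support x : X x -> exists N, forall p, N <= p -> weight (x p) = 0.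
Proof. by move=> /weight_of_point/coding_dim [N [hN _]]; exists N. Qed.

Lemma wsum_bounded x : X x -> forall n, wsum weight x n <= D.
Proof.
move=> /weight_of_point/coding_dim [N [hN hs]] n.
case: (leqP n N) => h; first exact: leq_trans (wsum_mono _ _ h) hs.
by rewrite (wsum_stable hN (ltnW h)).
Qed.

Variable a0 : A.
Hypothesis a0_weight : weight a0 = 0.

Lemma weight0 a : weight a = 0 -> a = a0.
Proof. by move=> h; apply: (weight_inj pi_inj); rewrite h a0_weight. Qed.

(** Every point ends in a0^omega, so a0^omega is the only periodic point. *)
Lemma codable_unique_periodic : (exists x, X x) -> unique_periodic X.
Proof.
case=> x0 hx0; have [N hN] := weight_support hx0.
have zero_tail n : x0 (N + n) = a0 by apply/weight0/hN/leq_addr.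
exists (fun n => x0 (N + n)); split.
- exact: shift_iter (proj2 HX) hx0.
- by exists 1; split=> // n; rewrite !zero_tail.
- move=> y hy [p [hp hper]] n; rewrite zero_tail.
  have [Ny hNy] := weight_support hy.
  have y_per k : y n = y (n + k * p).
    by elim: k => [|k IH]; rewrite ?addn0 // IH mulSn [p + _]addnC addnA hper.
  rewrite (y_per Ny); apply/weight0/hNy.
  by apply: leq_trans (leq_addl _ _); rewrite leq_pmulr.
Qed.

Let z0 : nat -> A := fun=> a0.

Section Transfer.
Local Unset Implicit Arguments.
Variables (K : nat) (F : forall d, seq {ffun 'I_d -> bool} -> 'I_K).
Local Set Implicit Arguments.
Hypothesis F_congr : forall d, d <= D -> forall u v, F d u = F d v ->
  forall w, code_lang X pi d (u ++ w) <-> code_lang X pi d (v ++ w).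

(** If u and u' have the same weight and the same F-classes of their prefix
    codes, then u.z in X implies u'.z in X for every z of nonzero weight:
    the code of u.z has the form code(u) w, hence code(u') w is a code of
    some x' in X, and x' and u'.z have the same weights. *)
Lemma follower_transfer u u' z :
  X (catp u z) -> word_weight weight u = word_weight weight u' ->
  (forall d, word_weight weight u < d <= D ->
     F d (prefix_code weight d u z0) = F d (prefix_code weight d u' z0)) ->
  (exists p, weight (z p) != 0) -> X (catp u' z).
Proof.
move=> hX es eF [p0 hp0]; set x := catp u z.
have [N hN] := weight_support hX.
pose d := wsum weight x N.
have [w hm] := encodes_exists hN (erefl d).
have hdD : d <= D := wsum_bounded hX N.
have hsd : word_weight weight u < d.
  have := encodes_le hm (size u + p0.+1).
  by rewrite /x wsum_catp_ge wsum_catp_size wsumS; move: hp0; rewrite -lt0n; lia.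
have hw := encodes_prefix hm hsd.
set w2 := drop (size u) w in hw.
have hR : code_lang X pi d (prefix_code weight d u z0 ++ w2).
  by exists x; split=> //; rewrite (prefix_code_indep _ _ _ z0 z) -hw.
have eFd := eF d; rewrite hsd hdD in eFd.
have [x' [hx' hm']] := (F_congr hdD (eFd isT) w2).1 hR.
have hm2 : encodes weight d (catp u' z) (prefix_code weight d u' z ++ w2).
  by apply: (encodes_transfer (u := u)) => //; rewrite -hw.
rewrite (prefix_code_indep _ _ _ z z0) in hm2.
apply: mem_ext hx' _ => n; apply: (weight_inj pi_inj).
exact: encodes_weights hm' hm2 n.
Qed.

End Transfer.

Hypothesis weakly_codable : weakly_one_codable_N (letter_image pi X).

(** The class of u records whether u.a0^omega is in X, the weight of u, and
    the classes of the prefix codes of u in the languages R_d, d <= D. *)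
Lemma codable_finite_followers : finite_followers X.
Proof.
have [K [F HF]] := @finite_index_family _ (code_lang X pi) D
  (fun d _ => weakly_codable_finite_index weakly_codable d).
pose s u := word_weight weight u.
pose g u : bool * bool * 'I_D.+1 * {ffun 'I_D.+1 -> 'I_K} :=
  (asbool (X (catp u z0)), s u <= D, inord (s u),
   [ffun e : 'I_D.+1 => F (s u + e) (prefix_code weight (s u + e) u z0)]).
exists ((bool * bool * 'I_D.+1 * {ffun 'I_D.+1 -> 'I_K})%type : finType), g.
move=> u u' [e1 e2 e3 e4] z hX.
have hsD : s u <= D by rewrite /s -(wsum_catp_size _ _ z) wsum_bounded.
have es : s u = s u'.
  by move/(congr1 val): e3; rewrite /= !inordK // ltnS -?e2 hsD.
case: (asboolP (exists p, weight (z p) != 0)) => [hz|hz].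
  apply: (follower_transfer HF hX es) => // d /andP [hsd hdD].
  have := congr1 (fun f : {ffun 'I_D.+1 -> 'I_K} => f (inord (d - s u))) e4.
  rewrite !ffunE -es.
  by have -> : s u + (inord (d - s u) : 'I_D.+1) = d by rewrite inordK /s; lia.
(* Otherwise z = a0^omega, and the first component of the class decides. *)
have z_zero n : z n = a0.
  by apply: weight0; apply/eqP; apply/negPn/negP => h; apply: hz; exists n.
have zE : catp u z =1 catp u z0 /\ catp u' z =1 catp u' z0.
  by split=> n; rewrite /catp !z_zero.
have /asboolP : asbool (X (catp u' z0)) by rewrite -e1 asboolT //; exact: mem_ext hX zE.1.
by move=> h; apply: mem_ext h _ => n; rewrite zE.2.
Qed.

End CodableShift.

Lemma zero_coding (A : finType) (a : A) :
  exists pi : A -> 'I_#|A|, bijective pi /\ weight pi a = 0.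
Proof.
have hA : 0 < #|A| by apply/card_gt0P; exists a.
pose t := tperm (enum_rank a) (Ordinal hA).
exists (fun x => t (enum_rank x)); split; last by rewrite /weight tpermL.
by exists (fun i => enum_val (t i)) => [x|i]; rewrite ?tpermK ?enum_rankK ?enum_valK ?tpermK.
Qed.

Lemma mkseq_add (T : Type) (f : nat -> T) m n :
  mkseq f (m + n) = mkseq f m ++ mkseq (fun i => f (m + i)) n.
Proof.
rewrite /mkseq iotaD map_cat; congr (_ ++ _).
by rewrite add0n -{1}(addn0 m) iotaDl -map_comp.
Qed.

Section Pumping.
Variables (A : finType) (X : (nat -> A) -> Prop) (T : finType) (g : seq A -> T).
Hypothesis HX : subshift X.
Hypothesis g_followers : forall u v, g u = g v -> forall z, X (catp u z) -> X (catp v z).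

Lemma pumping x p p' : X x -> p < p' -> g (mkseq x p) = g (mkseq x p') ->
  X (fun i => x (p + i %% (p' - p))).
Proof.
have [Hc Hs] := HX; move=> hx hpp hg.
set L := p' - p; have hL : 0 < L by rewrite subn_gt0.
set per := fun i => x (p + i %% L).
pose u := mkseq x p; pose w := mkseq (fun i => x (p + i)) L.
pose y := catp u per.
have e12 : mkseq x p' = u ++ w by rewrite -mkseq_add subnKC // ltnW.
pose r k := mkseq y (p + k * L).
have r0 : r 0 = u.
  rewrite /r mul0n addn0; apply/eq_in_map => i.
  by rewrite mem_iota add0n => /andP [_ hi]; rewrite /y /u catp_mkseq.
have rS k : r k.+1 = r k ++ w.
  rewrite /r mulSn [L + _]addnC addnA mkseq_add; congr (_ ++ _).
  apply/eq_in_map => i; rewrite mem_iota add0n => /andP [_ hi].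
  have := catp_size u per (k * L + i); rewrite size_mkseq addnA -/y => ->.
  by rewrite /per modnMDl modn_small.
have pump k z : X (catp u z) -> X (catp (r k) z).
  elim: k z => [|k IH] z hz; first by rewrite r0.
  have h1 : X (catp (u ++ w) z) by apply: g_followers hz; rewrite -e12.
  have h2 : X (catp u (catp w z)) by apply: mem_ext h1 _ => n; rewrite catp_cat.
  by rewrite rS; apply: mem_ext (IH _ h2) _ => n; rewrite catp_cat.
have hy : X y.
  apply: Hc => m; exists (catp (r m) (fun i => x (p + i))); split.
    by apply: pump; apply: mem_ext hx _ => n; rewrite catp_mkseq_shift.
  move=> i hi; rewrite /r catp_mkseq //; apply: (leq_trans hi).
  by rewrite (leq_trans (leq_pmulr m hL)) ?leq_addl.
by apply: shift_catp Hs hy.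
Qed.

End Pumping.

Section SoficUniquePeriodic.
Variables (A : finType) (X : (nat -> A) -> Prop) (T : finType) (g : seq A -> T).
Hypothesis HX : subshift X.
Hypothesis g_followers : forall u v, g u = g v -> forall z, X (catp u z) -> X (catp v z).
Variable a : A.
Hypothesis a_only_periodic : forall y, X y -> periodic_point y -> forall n, y n = a.

Lemma class_changes x p p' : X x -> p < p' -> x p != a -> g (mkseq x p) != g (mkseq x p').
Proof.
move=> hx hpp hxa; apply/eqP => /(pumping HX g_followers hx hpp) hper.
have per : periodic_point (fun i => x (p + i %% (p' - p))).
  by exists (p' - p); split=> [|n]; rewrite ?subn_gt0 // modnDr.
by move: (a_only_periodic hper per 0) hxa; rewrite mod0n addn0 => ->; rewrite eqxx.
Qed.

Lemma few_nonzero_letters x n : X x -> #|[pred q : 'I_n | x q != a]| <= #|T|.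
Proof.
move=> hx.
have inj : {in [pred q : 'I_n | x q != a] &, injective (fun q : 'I_n => g (mkseq x q))}.
  move=> q q' hq hq' e; apply: val_inj; case: (ltngtP q q') => // h.
  - by have := class_changes hx h hq; rewrite e eqxx.
  - by have := class_changes hx h hq'; rewrite e eqxx.
by rewrite -(card_in_imset inj); exact: max_card.
Qed.

Variable pi : A -> 'I_#|A|.
Hypothesis a_weight : weight pi a = 0.
Local Notation weight := (weight pi).

Lemma wsum_le_bound x n : X x -> wsum weight x n <= #|T| * #|A|.
Proof.
move=> hx; rewrite /wsum (bigID (fun q : 'I_n => x q != a)) /=.
rewrite [X in _ + X]big1 ?addn0; last by move=> q /negbNE /eqP ->.
apply: (leq_trans (n := \sum_(q < n | x q != a) #|A|)).
  by apply: leq_sum => q _; exact: ltnW (ltn_ord _).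
by rewrite sum_nat_const leq_mul2r (few_nonzero_letters n hx) orbT.
Qed.

(** A bounded nondecreasing sequence of prefix weights stabilizes: the
    weights of a point of X have finite support. *)
Lemma weight_finite_support x : X x ->
  exists N, (forall q, N <= q -> weight (x q) = 0) /\ wsum weight x N <= #|T| * #|A|.
Proof.
move=> hx; pose P m := asbool (exists n, wsum weight x n = m).
have exP : exists m, P m by exists 0; apply: asboolT; exists 0; exact: wsum0.
have ubP m : P m -> m <= #|T| * #|A| by move=> /asboolP [n <-]; exact: wsum_le_bound.
case: (ex_maxnP exP ubP) => m /asboolP [N hN] hmax.
exists N; split; last by rewrite hN; apply/ubP/asboolT; exists N.
move=> q hq.
have h1 : wsum weight x q.+1 <= m by apply: hmax; apply: asboolT; exists q.+1.
have h2 : m <= wsum weight x q by rewrite -hN; exact: wsum_mono.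
by move: h1; rewrite wsumS; lia.
Qed.

End SoficUniquePeriodic.

Section FollowerCodes.
Variables (A : finType) (X : (nat -> A) -> Prop) (T : finType) (g : seq A -> T).
Hypothesis g_followers : forall u v, g u = g v -> forall z, X (catp u z) -> X (catp v z).
Variables (pi : A -> 'I_#|A|) (a : A).
Hypothesis pi_inj : injective pi.
Hypothesis a_weight : weight pi a = 0.
Local Notation weight := (weight pi).
Let z0 : nat -> A := fun=> a.

Definition word_code d u (w : seq {ffun 'I_d -> bool}) : Prop :=
  w = prefix_code weight d u z0 /\ word_weight weight u < d.
Arguments word_code : clear implicits.

(** Codes of words are injective: the columns determine the prefix
    weights, hence the weights, hence the letters. *)
Lemma word_code_inj d u u' w : word_code d u w -> word_code d u' w -> u = u'.
Proof.
move=> [hw hs] [hw' hs'].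
have hsz : size u = size u' by have := congr1 size hw; rewrite hw' !size_mkseq.
have wsum_eq n : n <= size u -> wsum weight (catp u z0) n = wsum weight (catp u' z0) n.
  case: n => [|j] hj; first by rewrite !wsum0.
  have := congr1 (nth (column d 0) ^~ j) hw'; rewrite {1}hw !nth_mkseq -?hsz //.
  apply: column_inj.
    by apply: ltnW; apply: leq_ltn_trans hs; rewrite -(wsum_catp_size _ _ z0) wsum_mono.
  by apply: ltnW; apply: leq_ltn_trans hs'; rewrite -(wsum_catp_size _ _ z0) wsum_mono -?hsz.
apply: (eq_from_nth (x0 := a) hsz) => j hj; apply: (weight_inj pi_inj).
have := wsum_eq j.+1 hj; rewrite !wsumS wsum_eq ?(ltnW hj) // => /addnI.
by rewrite /catp hj -hsz hj.
Qed.

Definition decode d (w : seq {ffun 'I_d -> bool}) : seq A :=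
  if excluded_middle_informative (exists u, word_code d u w) is left H
  then proj1_sig (constructive_indefinite_description _ H) else [::].

Lemma decodeP d (w : seq {ffun 'I_d -> bool}) :
  (exists u, word_code d u w) -> word_code d (decode w) w.
Proof.
rewrite /decode; case: excluded_middle_informative => // H _.
by case: constructive_indefinite_description.
Qed.

Lemma encodes_word_code d x w1 w2 : encodes weight d x (w1 ++ w2) -> w1 != [::] ->
  word_code d (mkseq x (size w1)) w1.
Proof.
move=> [h1 _ _] nz1; have agree q : q < size w1 -> catp (mkseq x (size w1)) z0 q = x q.
  exact: catp_mkseq.
split.
  apply: (eq_from_nth (x0 := column d 0)); first by rewrite !size_mkseq.
  move=> j hj; have hj' : j < size (w1 ++ w2) by rewrite size_cat ltn_addr.
  have [e _] := h1 j hj'.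
  rewrite nth_cat hj in e; rewrite e /prefix_code nth_mkseq ?size_mkseq //.
  by congr column; apply: wsum_ext => q hq; rewrite agree //; lia.
have hj : (size w1).-1 < size (w1 ++ w2) by rewrite size_cat; case: (w1) nz1 => //= *; lia.
have [_ ] := h1 _ hj; rewrite prednK ?lt0n ?size_eq0 //.
by rewrite -(wsum_catp_size _ _ z0) size_mkseq (wsum_ext _ agree).
Qed.

(** The class of a nonempty code w is (whether w codes a word u, the weight
    of u, the follower class of u); equal classes give equal right quotients
    of R_d, by exchanging prefixes of equal weight. *)
Lemma sofic_code_lang_finite_index d : finite_index (code_lang X pi d).
Proof.
pose s u := word_weight weight u.
pose h (w : seq {ffun 'I_d -> bool}) : option (bool * 'I_d.+1 * T) :=
  if w is [::] then None
  else Some (asbool (exists u, word_code d u w), inord (s (decode w)), g (decode w)).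
exists (option (bool * 'I_d.+1 * T) : finType), h.
suff H w1 w2 : h w1 = h w2 -> forall w, code_lang X pi d (w1 ++ w) -> code_lang X pi d (w2 ++ w).
  by move=> u v huv w; split; [exact: H | exact: H (esym huv) w].
move=> E w [x [hx hm]].
case: w1 E hm => [|b1 w1'] E hm; first by case: w2 E => // _; exists x.
case: w2 E => // b2 w2' [e1 e2 e3]; set w1 := b1 :: w1' in hm e1 e2 e3.
set w2 := b2 :: w2' in e1 e2 e3 *.
have hc1 := encodes_word_code hm isT.
have hU1 : word_code d (decode w1) w1 by apply: decodeP; exists (mkseq x (size w1)).
have hU2 : word_code d (decode w2) w2.
  by apply/decodeP/asboolP; rewrite -e1 asboolT //; exists (mkseq x (size w1)).
have eU : decode w1 = mkseq x (size w1) := word_code_inj hU1 hc1.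
have es : s (decode w1) = s (decode w2).
  by move/(congr1 val): e2; rewrite /= !inordK // ltnS ltnW //; [case: hU2 | case: hU1].
pose z i := x (size w1 + i).
have xE : x = catp (decode w1) z.
  by apply: functional_extensionality => n; rewrite eU catp_mkseq_shift.
rewrite xE in hx hm.
exists (catp (decode w2) z); split; first exact: g_followers e3 _ hx.
have [hw1 hs1] := hU1; have [hw2 hs2] := hU2.
rewrite [in w2 ++ _]hw2 (prefix_code_indep _ _ _ z0 z).
apply: (encodes_transfer (u := decode w1)) => //.
by rewrite -(prefix_code_indep _ _ _ z0 z) -hw1.
Qed.

End FollowerCodes.

(** The unique periodic point of a subshift is a constant point a^omega:
    the shift of a periodic point is periodic. *)
Lemma unique_periodic_constant (A : finType) (X : (nat -> A) -> Prop) :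
  shift_invariant X -> unique_periodic X ->
  exists a : A, forall y, X y -> periodic_point y -> forall n, y n = a.
Proof.
move=> Hs [xp [hxp [p [hp hper]] huniq]]; exists (xp 0) => y hy hyp n.
rewrite (huniq _ hy hyp); elim: n => // n <-.
apply: (huniq (fun n => xp n.+1)); first exact: Hs.
by exists p; split=> // m; rewrite -addSn hper.
Qed.

Lemma sofic_unique_periodic_codable (A : finType) (X : (nat -> A) -> Prop) :
  subshift X -> sofic X -> unique_periodic X -> one_codable X.
Proof.
move=> HX /sofic_finite_followers [T [g Hg]] /(unique_periodic_constant (proj2 HX)) [a ha].
have [pi [pi_bij pi_a]] := zero_coding a; have pi_inj := bij_inj pi_bij.
exists pi; split=> //; split.
  apply: finite_index_weakly_codable => d.
  exact (sofic_code_lang_finite_index Hg pi_inj pi_a d).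
exists (#|T| * #|A|) => y [x [hx hy]].
have [N [hN hS]] := weight_finite_support HX Hg ha pi_a hx.
exists N; split=> [i hi|]; first by rewrite hy; apply: hN.
by rewrite (eq_bigr (fun i : 'I_N => weight pi (x i))) // => i _; rewrite hy.
Qed.

Lemma codable_sofic_unique_periodic (A : finType) (X : (nat -> A) -> Prop) :
  subshift X -> (exists x, X x) -> one_codable X -> sofic X /\ unique_periodic X.
Proof.
move=> HX hne [pi [pi_bij [Hw [D HD]]]]; have pi_inj := bij_inj pi_bij.
have [a0 a0_weight] : exists a0, weight pi a0 = 0.
  have [x0 hx0] := hne; have [N hN] := weight_support HD hx0.
  by exists (x0 N); apply: hN.
split; last exact (codable_unique_periodic HX pi_inj HD a0_weight hne).
apply/sofic_iff_finite_followers => //.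
exact (codable_finite_followers pi_inj HD a0_weight Hw).
Qed.

Theorem mainTheorem14 (A : finType) (X : (nat -> A) -> Prop) :
  subshift X -> (exists x, X x) ->
  ((sofic X /\ unique_periodic X) <-> one_codable X).
Proof.
move=> HX hne; split.
  by case=> hs hu; exact: sofic_unique_periodic_codable.
exact: codable_sofic_unique_periodic.
Qed.
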